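(* The complete local statistics of an integer matrix $M\in\mathrm{Mat}(2,\mathbb{Z})$ depends only on the three invariants $\det(M)$, $\mathrm{trace}(M)$ and $\mathrm{mgcd}(M)$. Two integer matrices with the same triple of these invariants thus have the same local statistics on all lattices $L_n$, $n\in\mathbb{N}$. In particular, they have the same fixed point counts, both locally (the numbers of points of $L_n$ fixed by $M^m$, for all $n,m$) and globally (the numbers of isolated fixed points of $M^m$ on $\mathbb{T}^2$, for all $m$).
   Context: For $M=\begin{pmatrix}a&b\\c&d\end{pmatrix}$, $\mathrm{mgcd}(M)=\gcd(b,c,d-a)\ge0$. $\mathbb{T}^2=\mathbb{R}^2/\mathbb{Z}^2$, with integer matrices acting by multiplication mod $1$, and $L_n=\{(\frac{k}{n},\frac{\ell}{n}):0\le k,\ell<n\}\subset\mathbb{T}^2$. Two integer matrices have the same local statistics on $L_n$ if the directed pseudo-graphs on $L_n$ they induce (vertices the points of $L_n$, a directed edge from $x$ to $Mx$) are isomorphic as graphs. *)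

From HB Require Import structures.
From mathcomp Require Import all_boot all_order all_fingroup all_algebra.
From mathcomp Require Import reals.
Set Implicit Arguments. Unset Strict Implicit. Unset Printing Implicit Defensive.
Import Order.TTheory GRing.Theory Num.Theory.
Local Open Scope ring_scope.

(* Integer 2x2 matrices M = [[a, b], [c, d]] with a = M 0 0, b = M 0 1,
   c = M 1 0, d = M 1 1. *)
Notation mat2 := ('M[int]_2).

Definition ent (M : mat2) (i j : nat) : int := M (inord i) (inord j).

Definition mgcd (M : mat2) : int :=
  gcdz (ent M 0 1) (gcdz (ent M 1 0) (ent M 1 1 - ent M 0 0)).

(* The lattice L_n = {(k/n, l/n) : 0 <= k, l < n}; the point (k/n, l/n) is
   represented by the pair (k, l) : 'I_n * 'I_n. *)
Definition Lat (n : nat) : finType := ('I_n * 'I_n)%type.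

Lemma ord_pos (n : nat) (x : 'I_n) : (0 < n)%N.
Proof. exact: leq_ltn_trans (leq0n x) (ltn_ord x). Qed.

(* reduction of an integer modulo n, as an element of 'I_n
   (n > 0 is witnessed by an element of 'I_n) *)
Definition ord_mod (n : nat) (w : 'I_n) (z : int) : 'I_n :=
  Ordinal (ltn_pmod (absz (z %% n%:Z)%Z) (ord_pos w)).

(* The action of M on L_n (multiplication mod 1):
   M (k/n, l/n) = ((a k + b l)/n, (c k + d l)/n) mod 1. *)
Definition lat_map (M : mat2) (n : nat) (x : Lat n) : Lat n :=
  let k := (x.1 : nat)%:Z in let l := (x.2 : nat)%:Z in
  (ord_mod x.1 (ent M 0 0 * k + ent M 0 1 * l),
   ord_mod x.1 (ent M 1 0 * k + ent M 1 1 * l)).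

Definition lat_edge (M : mat2) (n : nat) : rel (Lat n) :=
  fun x y => lat_map M x == y.

(* Two integer matrices have the same local statistics on L_n iff the
   induced directed pseudo-graphs are isomorphic. *)
Definition same_local_stats (M N : mat2) (n : nat) : Prop :=
  exists phi : {perm Lat n},
    forall x y : Lat n, lat_edge M x y = lat_edge N (phi x) (phi y).

Definition lat_fix_count (M : mat2) (n : nat) : nat :=
  #|[set x : Lat n | lat_map M x == x]|.

Section Torus.
Variable R : realType.

Definition is_int (r : R) : Prop := exists k : int, r = k%:~R.

Definition in_fund (x : R * R) : Prop :=
  0 <= x.1 < 1 /\ 0 <= x.2 < 1.

Definition mat_act (M : mat2) (x : R * R) : R * R :=
  ((ent M 0 0)%:~R * x.1 + (ent M 0 1)%:~R * x.2,
   (ent M 1 0)%:~R * x.1 + (ent M 1 1)%:~R * x.2).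

Definition torus_fixed (M : mat2) (x : R * R) : Prop :=
  in_fund x /\ is_int ((mat_act M x).1 - x.1) /\ is_int ((mat_act M x).2 - x.2).

Definition torus_isolated_fixed (M : mat2) (x : R * R) : Prop :=
  torus_fixed M x /\
  exists eps : R, 0 < eps /\
    forall y, torus_fixed M y ->
      (exists k1 k2 : int, `|y.1 - x.1 - k1%:~R| < eps /\ `|y.2 - x.2 - k2%:~R| < eps) ->
      y = x.

Definition equinumerous (A B : R * R -> Prop) : Prop :=
  exists f : R * R -> R * R,
    (forall x, A x -> B (f x)) /\
    (forall x y, A x -> A y -> f x = f y -> x = y) /\
    (forall y, B y -> exists x, A x /\ f x = y).
End Torus.

From HB Require Import structures.
From mathcomp Require Import all_boot all_order all_fingroup all_algebra.
From mathcomp Require Import reals.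
From mathcomp Require Import zify ring lra.
Set Implicit Arguments.
Unset Strict Implicit.
Unset Printing Implicit Defensive.

Import Order.TTheory GRing.Theory Num.Theory.
Local Open Scope ring_scope.

(* With g = mgcd M and a = M 0 0, write M = a + g K and N = a + g L with K, L
   primitive; equality of traces and determinants forces g | N 0 0 - a and
   gives K and L the same characteristic polynomial.  A primitive K is
   conjugate to its companion matrix by S = [v | K v], and det S is the value
   at v of a primitive binary quadratic form, which can be made prime to any
   given n.  Hence for every n > 0 there is an integer P with P M = N P and
   det P prime to n.  Multiplication by P then permutes L_n and intertwines M
   and N; on the torus, x |-> P x mod Z^2 maps the fixed points of M^m
   bijectively onto those of N^m as soon as det P is prime to det (M^m - 1).
   These fixed points are all isolated if det (M^m - 1) <> 0, and none is
   isolated otherwise. *)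

(** * Two-by-two matrices *)

Section Mx2.
Variable R : comPzRingType.
Implicit Types (a b c d g : R) (A K : 'M[R]_2).

Definition mx2 a b c d : 'M[R]_2 :=
  \matrix_(i, j) if i == 0 then (if j == 0 then a else b) else (if j == 0 then c else d).

Lemma mx2E A : A = mx2 (A 0 0) (A 0 1) (A 1 0) (A 1 1).
Proof.
apply/matrixP=> i j; rewrite !mxE.
by case: i => [[|[|i]] Hi] //; case: j => [[|[|j]] Hj] //; congr (A _ _); apply: val_inj.
Qed.

Lemma mx2P A : exists a b c d, A = mx2 a b c d.
Proof. by exists (A 0 0), (A 0 1), (A 1 0), (A 1 1); apply: mx2E. Qed.

Lemma mx2_mul a b c d a' b' c' d' :
  mx2 a b c d * mx2 a' b' c' d' =
  mx2 (a * a' + b * c') (a * b' + b * d') (c * a' + d * c') (c * b' + d * d').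
Proof.
apply/matrixP=> i j; rewrite !mxE !big_ord_recl big_ord0 !mxE addr0.
by case: i => [[|[|i]] Hi] //; case: j => [[|[|j]] Hj].
Qed.

Lemma mul_mx2E A B i j : (A * B) i j = A i 0 * B 0 j + A i 1 * B 1 j.
Proof.
by rewrite -mulmxE !mxE !big_ord_recl big_ord0 addr0; congr (_ * _ + A i _ * B _ j); apply: val_inj.
Qed.

Lemma det_mx2 a b c d : \det (mx2 a b c d) = a * d - b * c.
Proof.
rewrite (expand_det_row _ 0) !big_ord_recl big_ord0 /cofactor !det_mx11 !mxE /=.
by rewrite /bump /=; ring.
Qed.

Lemma tr_mx2 a b c d : \tr (mx2 a b c d) = a + d.
Proof. by rewrite /mxtrace !big_ord_recl big_ord0 !mxE /= addr0. Qed.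

Lemma adj_mx2 a b c d : \adj (mx2 a b c d) = mx2 d (- b) (- c) a.
Proof.
apply/matrixP=> i j; rewrite !mxE /cofactor !det_mx11 !mxE /=.
by case: i => [[|[|i]] Hi] //; case: j => [[|[|j]] Hj] //=; rewrite /bump /=; ring.
Qed.

Lemma det_adj_mx2 A : \det (\adj A) = \det A.
Proof.
by have [a [b [c [d ->]]]] := mx2P A; rewrite adj_mx2 !det_mx2; ring.
Qed.

Lemma det_scalar_addZ a g K :
  \det (a%:M + g *: K) = a ^+ 2 + a * g * \tr K + g ^+ 2 * \det K.
Proof.
have [p [q [r [s ->]]]] := mx2P K.
have -> : a%:M + g *: mx2 p q r s = mx2 (a + g * p) (g * q) (g * r) (a + g * s).
  apply/matrixP=> i j; rewrite !mxE.
  by case: i => [[|[|i]] Hi] //; case: j => [[|[|j]] Hj] //=; rewrite mulr0n add0r.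
by rewrite !det_mx2 tr_mx2; ring.
Qed.

End Mx2.

Lemma tr_scalar_addZ (R : comPzRingType) (n : nat) (a g : R) (K : 'M[R]_n) :
  \tr (a%:M + g *: K) = a *+ n + g * \tr K.
Proof. by rewrite mxtraceD mxtrace_scalar mxtraceZ. Qed.

Lemma conj_scalar_addZ (R : comPzRingType) (n : nat) (a g : R) (K S C : 'M[R]_n.+1) :
  K * S = S * C -> (a%:M + g *: K) * S = S * (a%:M + g *: C).
Proof.
rewrite -!mulmxE => KS.
by rewrite mulmxDl mulmxDr -scalemxAl -scalemxAr KS scalar_mxC.
Qed.

Lemma adj_conj (R : idomainType) (n : nat) (M S C : 'M[R]_n.+1) :
  M * S = S * C -> \det S != 0 -> \adj S * M = C * \adj S.
Proof.
move=> MS dS; have scaled : \det S *: (\adj S * M) = \det S *: (C * \adj S).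
  rewrite -!mulmxE -mul_mx_scalar -mul_scalar_mx -{1}mul_mx_adj -mul_adj_mx.
  by rewrite !mulmxA -[_ *m M *m S]mulmxA !mulmxE MS -!mulmxE !mulmxA.
apply/matrixP => i j; apply: (mulfI dS).
by have := congr1 (fun A : 'M[R]_n.+1 => A i j) scaled; rewrite !mxE.
Qed.

Lemma det_subr1_conj (R : idomainType) (n : nat) (P X Y : 'M[R]_n.+1) :
  P * X = Y * P -> \det P != 0 -> \det (X - 1) = \det (Y - 1).
Proof.
move=> PX dP; apply: (mulfI dP); rewrite -detM [RHS]mulrC -detM; congr (\det _).
by rewrite mulrBr mulrBl mulr1 mul1r PX.
Qed.

(** * Local conjugacy from the invariants *)

Lemma coprime_prime_dvd (m n : nat) : (0 < n)%N ->
  (forall p, prime p -> (p %| n)%N -> ~~ (p %| m)%N) -> coprime m n.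
Proof.
move=> n_gt0 no_p; apply/negPn/negP => not_cop.
have d_gt1 : (1 < gcdn m n)%N.
  by move: not_cop; rewrite /coprime; have := gcdn_gt0 m n; rewrite n_gt0 orbT; lia.
have p_dvd := pdiv_dvd (gcdn m n).
have := no_p _ (pdiv_prime d_gt1) (dvdn_trans p_dvd (dvdn_gcdr _ _)).
by rewrite (dvdn_trans p_dvd (dvdn_gcdl _ _)).
Qed.

Lemma dvdz_partn (pi : nat_pred) (n p : nat) : prime p -> (0 < n)%N -> (p %| n)%N ->
  (p%:Z %| (n`_pi)%:Z)%Z = (p \in pi).
Proof.
move=> p_pr n_gt0 p_n; rewrite dvdzE /=.
by have := pi_of_part pi n_gt0 p; rewrite !inE /= !mem_primes p_pr p_n n_gt0 part_gt0.
Qed.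

Lemma primez_dvdM (p : nat) (m k : int) : prime p ->
  (p%:Z %| m * k)%Z = (p%:Z %| m)%Z || (p%:Z %| k)%Z.
Proof. by move=> p_pr; rewrite !dvdzE abszM Euclid_dvdM. Qed.

(* For a prime [p] dividing [n], exactly one of the three monomials of the
   form is prime to [p] at the chosen [x] and [y]. *)
Lemma primitive_form_coprime (r e q : int) (n : nat) : (0 < n)%N ->
  gcdz q (gcdz r e) = 1 ->
  exists x y : int, coprime `|(r * x * x + e * x * y - q * y * y)%R| n.
Proof.
move=> n_gt0 prim.
pose pi_x : nat_pred := [pred p | (p %| absz r)%N && ~~ (p %| absz q)%N].
pose pi_y : nat_pred := [pred p | ~~ (p %| absz r)%N].
pose x := (n`_pi_x)%:Z; pose y := (n`_pi_y)%:Z.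
exists x, y; apply: coprime_prime_dvd => // p p_pr p_n.
have px := dvdz_partn pi_x p_pr n_gt0 p_n; have py := dvdz_partn pi_y p_pr n_gt0 p_n.
have dvdz_abs t : (p %| absz t)%N = (p%:Z %| t)%Z by rewrite dvdzE.
rewrite -/x -/y !inE !dvdz_abs in px py.
apply/negP; rewrite -(dvdzE p%:Z) => p_f.
have dvdzB_f t : ~~ (p%:Z %| t)%Z -> (p%:Z %| r * x * x + e * x * y - q * y * y - t)%Z ->
    False.
  by move=> pt /(rpredB p_f); rewrite opprB addrC subrK (negPf pt).
case: (boolP (p%:Z %| r)%Z) => p_r /= in px py; last first.
  apply: (dvdzB_f (r * x * x)); first by rewrite !primez_dvdM // (negPf p_r) px.
  have -> : r * x * x + e * x * y - q * y * y - r * x * x = y * (e * x - q * y) by ring.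
  by rewrite dvdz_mulr ?py.
case: (boolP (p%:Z %| q)%Z) => p_q /= in px.
  have p_e : ~~ (p%:Z %| e)%Z.
    apply: contraL p_pr => p_e.
    have : (p%:Z %| gcdz q (gcdz r e))%Z by rewrite !dvdz_gcd p_q p_r.
    by rewrite prim dvdzE dvdn1 => /eqP /= ->.
  apply: (dvdzB_f (e * x * y)); first by rewrite !primez_dvdM // (negPf p_e) px py.
  have -> : r * x * x + e * x * y - q * y * y - e * x * y = r * x * x - q * y * y by ring.
  by rewrite rpredB // !dvdz_mulr.
apply: (dvdzB_f (- (q * y * y))); first by rewrite rpredN !primez_dvdM // (negPf p_q) py.
have -> : r * x * x + e * x * y - q * y * y - - (q * y * y) = x * (r * x + e * y) by ring.
by rewrite dvdz_mulr ?px.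
Qed.

Lemma inord0 : (inord 0 : 'I_2) = 0. Proof. by apply: val_inj; rewrite /= inordK. Qed.
Lemma inord1 : (inord 1 : 'I_2) = 1. Proof. by apply: val_inj; rewrite /= inordK. Qed.
Definition entE := (inord0, inord1).

Lemma mgcdE (M : mat2) : mgcd M = gcdz (M 0 1) (gcdz (M 1 0) (M 1 1 - M 0 0)).
Proof. by rewrite /mgcd /ent !entE. Qed.

Definition companion (d t : int) : mat2 := mx2 0 (- d) 1 t.

(* [S = [v | K v]], where [det S] is a primitive quadratic form in [v]. *)
Lemma companion_conj (K : mat2) (n : nat) : (0 < n)%N -> mgcd K = 1 ->
  exists S : mat2, K * S = S * companion (\det K) (\tr K) /\ coprime `|\det S| n.
Proof.
have [p [q [r [s ->]]]] := mx2P K; rewrite mgcdE !mxE /= => n_gt0 prim.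
have [x [y cop]] := primitive_form_coprime n_gt0 prim.
exists (mx2 x (p * x + q * y) y (r * x + s * y)); split.
  by rewrite !mx2_mul det_mx2 tr_mx2; congr mx2; ring.
by rewrite det_mx2 (_ : _ - _ = r * x * x + (s - p) * x * y - q * y * y) //; ring.
Qed.

Lemma mgcd_eq0 (M : mat2) : mgcd M = 0 -> M = (M 0 0)%:M.
Proof.
rewrite mgcdE => /eqP; rewrite !gcdz_eq0 => /and3P[/eqP b0 /eqP c0 /eqP da].
rewrite [LHS]mx2E b0 c0 (_ : M 1 1 = M 0 0); last by lia.
by apply/matrixP=> i j; rewrite !mxE; case: i => [[|[|i]] Hi] //; case: j => [[|[|j]] Hj].
Qed.

Lemma gcdz3_mulr (x y z g : int) : 0 <= g ->
  gcdz (x * g) (gcdz (y * g) (z * g)) = gcdz x (gcdz y z) * g.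
Proof. by move=> g_ge0; rewrite -(gez0_abs g_ge0) -!mulz_gcdl. Qed.

Lemma mgcd_decomp (M : mat2) (a : int) : mgcd M != 0 -> (mgcd M %| (M 0 0 - a)%R)%Z ->
  exists K : mat2, M = a%:M + mgcd M *: K /\ mgcd K = 1.
Proof.
have [p [q [r [s ->]]]] := mx2P M; rewrite !mxE /=.
have := mgcdE (mx2 p q r s); rewrite !mxE /=; set g := mgcd _ => gE g_neq0 g_p.
have g_ge0 : 0 <= g by rewrite gE.
have g_q : (g %| q)%Z by rewrite gE dvdz_gcdl.
have g_r : (g %| r)%Z by rewrite gE (dvdz_trans (dvdz_gcdr _ _)) ?dvdz_gcdl.
have g_s : (g %| s - a)%Z.
  rewrite (_ : s - a = (s - p) + (p - a)); last by ring.
  by rewrite rpredD // gE (dvdz_trans (dvdz_gcdr _ _)) ?dvdz_gcdr.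
pose d x := (x %/ g)%Z.
exists (mx2 (d (p - a)) (d q) (d r) (d (s - a))); split.
  apply/matrixP=> i j; rewrite !mxE.
  case: i => [[|[|i]] Hi] //; case: j => [[|[|j]] Hj] //=;
    by rewrite /d ?mulr0n ?mulr1n ?add0r mulrC divzK // addrC subrK.
rewrite mgcdE !mxE /= /d; apply: (mulIf g_neq0).
by rewrite mul1r -gcdz3_mulr // mulrBl !divzK // opprB addrA subrK -gE.
Qed.

(* From [2u = g t] and [u^2 + u g k = g^2 c] one gets [t^2 + 2 t k = 4 c],
   so [t] is even and [u = g (t / 2)]. *)
Lemma dvdz_of_shift (g u t k c : int) : g != 0 ->
  2 * u = g * t -> u * u + u * g * k = g * g * c -> (g %| u)%Z.
Proof.
move=> g_neq0 uE cE.
have tE : t * t = 2 * (2 * c - t * k).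
  apply: (mulfI (mulf_neq0 g_neq0 g_neq0)).
  have -> : g * g * (t * t) = (2 * u) * (2 * u) by rewrite uE; ring.
  have -> : g * g * (2 * (2 * c - t * k)) = 4 * (g * g * c) - 2 * (g * t) * g * k by ring.
  by rewrite -cE -uE; ring.
have : (2 %| t * t)%Z by rewrite tE dvdz_mulr.
rewrite (@primez_dvdM 2 t t isT) orbb => /dvdzP[h t2].
by apply/dvdzP; exists h; apply: (@mulfI _ 2) => //; rewrite uE t2; ring.
Qed.

Lemma scalar_part_congr (a b g : int) (K L : mat2) : g != 0 ->
  \tr (a%:M + g *: K) = \tr (b%:M + g *: L) ->
  \det (a%:M + g *: K) = \det (b%:M + g *: L) ->
  (g %| b - a)%Z.
Proof.
rewrite !tr_scalar_addZ !det_scalar_addZ => g_neq0 trE detE.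
have uE : 2 * (b - a) = g * (\tr K - \tr L).
  by apply/eqP; rewrite -subr_eq0 -(subrr (a *+ 2 + g * \tr K)) {1}trE; apply/eqP; ring.
apply: (dvdz_of_shift g_neq0 uE (k := \tr L) (c := \det K - \det L)).
transitivity (g * g * (\det K - \det L)
  + (b ^+ 2 + b * g * \tr L + g ^+ 2 * \det L - (a ^+ 2 + a * g * \tr K + g ^+ 2 * \det K))
  + a * (g * (\tr K - \tr L) - 2 * (b - a))); first ring.
by rewrite detE uE !subrr; ring.
Qed.

Lemma mgcd_dvd_diag (M N : mat2) :
  \det M = \det N -> \tr M = \tr N -> mgcd M = mgcd N ->
  (mgcd M %| (M 0 0 - N 0 0)%R)%Z.
Proof.
move=> detE trE gE; have [g0|g_neq0] := eqVneq (mgcd M) 0.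
  have ME := mgcd_eq0 g0; have NE := mgcd_eq0 (etrans (esym gE) g0).
  move: trE; rewrite {1}ME {1}NE !mxtrace_scalar !mulr2n => aE.
  by rewrite g0 dvd0z; apply/eqP; lia.
have g_diag (A : mat2) : (mgcd A %| (A 0 0 - A 0 0)%R)%Z by rewrite subrr dvdz0.
have [K [MK _]] := mgcd_decomp g_neq0 (g_diag M).
have gN_neq0 : mgcd N != 0 by rewrite -gE.
have [L [NL _]] := mgcd_decomp gN_neq0 (g_diag N).
rewrite -gE in NL.
by apply: (scalar_part_congr (K := L) (L := K) g_neq0); rewrite -MK -NL.
Qed.

Lemma coprime_neq0 (z : int) (n : nat) : (1 < n)%N -> coprime `|z| n -> z != 0.
Proof. by move=> n_gt1; apply: contraL => /eqP->; rewrite /coprime gcd0n neq_ltn n_gt1 orbT. Qed.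

Lemma conj_exp (R : pzRingType) (P X Y : R) (m : nat) :
  P * X = Y * P -> P * X ^+ m = Y ^+ m * P.
Proof.
move=> PX; elim: m => [|m IHm]; first by rewrite !expr0 mul1r mulr1.
by rewrite !exprS mulrA PX -mulrA IHm mulrA.
Qed.

Definition locally_conj (X Y : mat2) : Prop :=
  forall n : nat, (0 < n)%N -> exists P : mat2, P * X = Y * P /\ coprime `|\det P| n.

Lemma locally_conj_exp (X Y : mat2) (m : nat) :
  locally_conj X Y -> locally_conj (X ^+ m) (Y ^+ m).
Proof. by move=> XY n /XY[P [PX cop]]; exists P; split=> //; apply: conj_exp. Qed.

Lemma locally_conj_primitive (a g : int) (K L : mat2) :
  mgcd K = 1 -> mgcd L = 1 -> \det K = \det L -> \tr K = \tr L ->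
  locally_conj (a%:M + g *: K) (a%:M + g *: L).
Proof.
move=> K1 L1 detKL trKL n n_gt0.
(* Working modulo [2 n] also makes [det S] nonzero. *)
have n2_gt0 : (0 < n.*2)%N by rewrite double_gt0.
have n2_gt1 : (1 < n.*2)%N by rewrite -addnn; lia.
have [S [KS cS]] := companion_conj n2_gt0 K1.
have [T [LT cT]] := companion_conj n2_gt0 L1.
rewrite -trKL -detKL in LT.
have MS := conj_scalar_addZ a g KS; have NT := conj_scalar_addZ a g LT.
exists (T * \adj S); split.
  by rewrite -mulrA (adj_conj MS (coprime_neq0 n2_gt1 cS)) mulrA NT mulrA.
rewrite detM det_adj_mx2 abszM coprimeMl.
by move: cS cT; rewrite -muln2 !coprimeMr => /andP[-> _] /andP[-> _].
Qed.

Lemma locally_conj_invariants (M N : mat2) :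
  \det M = \det N -> \tr M = \tr N -> mgcd M = mgcd N -> locally_conj M N.
Proof.
move=> detE trE gE; have diagE := mgcd_dvd_diag (esym detE) (esym trE) (esym gE).
have [g0|g_neq0] := eqVneq (mgcd M) 0.
  have NE := mgcd_eq0 (etrans (esym gE) g0).
  move: diagE; rewrite -gE g0 dvd0z subr_eq0 => /eqP diagE.
  by rewrite (mgcd_eq0 g0) -diagE -NE => n _; exists 1; rewrite mul1r mulr1 det1 coprime1n.
have gN_neq0 : mgcd N != 0 by rewrite -gE.
have M_diag : (mgcd M %| (M 0 0 - M 0 0)%R)%Z by rewrite subrr dvdz0.
have [K [MK K1]] := mgcd_decomp g_neq0 M_diag.
have [L [NL L1]] := mgcd_decomp gN_neq0 diagE.
rewrite -gE in NL; set g := mgcd M in MK NL g_neq0.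
have trKL : \tr K = \tr L.
  by apply: (mulfI g_neq0); apply: (addrI (M 0 0 *+ 2)); rewrite -!tr_scalar_addZ -MK -NL.
have detKL : \det K = \det L.
  apply: (mulfI (expf_neq0 2 g_neq0)); apply: (addrI (M 0 0 ^+ 2 + M 0 0 * g * \tr K)).
  by rewrite -det_scalar_addZ -MK detE NL det_scalar_addZ trKL.
by rewrite MK NL; apply: locally_conj_primitive.
Qed.

(** * The lattices L_n *)

Lemma ord_modE (n : nat) (w : 'I_n) (z : int) : (ord_mod w z : nat)%:Z = (z %% n)%Z.
Proof.
have n_neq0 : n%:Z != 0 by rewrite -lt0n (ord_pos w).
rewrite /ord_mod /= modn_small; first by rewrite gez0_abs ?modz_ge0.
by rewrite -ltz_nat gez0_abs ?modz_ge0 ?ltz_mod.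
Qed.

Lemma ord_mod_congr (n : nat) (w w' : 'I_n) (y z : int) :
  (y = z %[mod n])%Z -> ord_mod w y = ord_mod w' z.
Proof. by move=> yz; apply: val_inj; apply/eqP; rewrite -eqz_nat !ord_modE yz. Qed.

Lemma ord_mod_mulI (n : nat) (w w' : 'I_n) (c : int) (i j : 'I_n) :
  coprime `|c| n -> ord_mod w (c * i) = ord_mod w' (c * j) -> i = j.
Proof.
move=> cop /(congr1 (fun k : 'I_n => (k : nat)%:Z)); rewrite !ord_modE => /eqP.
rewrite eqz_mod_dvd -mulrBr Gauss_dvdzr ?coprimezE 1?coprime_sym // -eqz_mod_dvd.
by rewrite !modz_small ?ltz_nat ?ltn_ord // => /eqP[] /val_inj.
Qed.

Lemma lat_map_mul (P X : mat2) (n : nat) (x : Lat n) :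
  lat_map (P * X) x = lat_map P (lat_map X x).
Proof.
rewrite /lat_map /ent !entE !mul_mx2E.
by congr pair; apply: ord_mod_congr;
  rewrite !ord_modE -[RHS]modzDm !modzMmr modzDm; congr (_ %% _)%Z; ring.
Qed.

Lemma lat_map_scalar (c : int) (n : nat) (x : Lat n) :
  lat_map c%:M x = (ord_mod x.1 (c * x.1), ord_mod x.1 (c * x.2)).
Proof. by rewrite /lat_map /ent !entE !mxE /= !mulr0n !mulr1n !mul0r addr0 add0r. Qed.

Lemma lat_map_inj (P : mat2) (n : nat) : coprime `|\det P| n -> injective (@lat_map P n).
Proof.
move=> cop x y /(congr1 (@lat_map (\adj P) n)); rewrite -!lat_map_mul -mulmxE mul_adj_mx.
rewrite !lat_map_scalar => e.
move: (congr1 fst e) (congr1 snd e) => /= /(ord_mod_mulI cop) e1 /(ord_mod_mulI cop) e2.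
by rewrite [x]surjective_pairing e1 e2 -surjective_pairing.
Qed.

Lemma lat_map_conj (P X Y : mat2) (n : nat) (x : Lat n) :
  P * X = Y * P -> lat_map P (lat_map X x) = lat_map Y (lat_map P x).
Proof. by move=> PX; rewrite -!lat_map_mul PX. Qed.

Lemma card_fixed_conj (T : finType) (phi : {perm T}) (f g : T -> T) :
  (forall x, phi (f x) = g (phi x)) -> #|[set x | f x == x]| = #|[set x | g x == x]|.
Proof.
move=> conj; rewrite -(card_imset _ (@perm_inj _ phi)); apply: eq_card => y.
have [z ->] : exists z, y = phi z by exists (phi^-1 y)%g; rewrite permKV.
by rewrite !inE mem_imset ?inE -?conj ?(inj_eq perm_inj) //; apply: perm_inj.
Qed.

Section LatticeConjugation.
Variables (P X Y : mat2) (n : nat).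
Hypotheses (PX : P * X = Y * P) (cop : coprime `|\det P| n).

Let phi : {perm Lat n} := perm (lat_map_inj cop).

Lemma same_local_stats_conj : same_local_stats X Y n.
Proof.
by exists phi => x y; rewrite /lat_edge !permE -(lat_map_conj _ PX) (inj_eq (lat_map_inj cop)).
Qed.

Lemma lat_fix_count_conj : lat_fix_count X n = lat_fix_count Y n.
Proof. by apply: (card_fixed_conj (phi := phi)) => x; rewrite !permE (lat_map_conj _ PX). Qed.

End LatticeConjugation.

(** * Fixed points on the torus *)

Lemma mx2_kernel (A : mat2) : \det A = 0 ->
  exists v1 v2 : int, [/\ (v1 != 0) || (v2 != 0), A 0 0 * v1 + A 0 1 * v2 = 0
                                              & A 1 0 * v1 + A 1 1 * v2 = 0].
Proof.
rewrite [A]mx2E det_mx2 !mxE /=; set p := A 0 0; set q := A 0 1; set r := A 1 0; set s := A 1 1.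
move=> detA.
have [pq0 | pq_neq0] := boolP ((q == 0) && (p == 0)); last first.
  by exists q, (- p); split; [rewrite oppr_eq0 -negb_and | lia | lia].
have [rs0 | rs_neq0] := boolP ((s == 0) && (r == 0)); last first.
  by exists s, (- r); split; [rewrite oppr_eq0 -negb_and | lia | lia].
by exists 1, 0; move: pq0 rs0 => /andP[/eqP-> /eqP->] /andP[/eqP-> /eqP->].
Qed.

Section Torus.
Variable R : realType.
Implicit Types (r : R) (u v x y : R * R) (X Y P : mat2).

Definition int_vec u : bool := (u.1 \is a Num.int) && (u.2 \is a Num.int).

Definition frac r : R := r - (Num.floor r)%:~R.

Definition fracv u : R * R := (frac u.1, frac u.2).

Lemma is_intE r : is_int r <-> r \is a Num.int.
Proof. exact: rwP intrP. Qed.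

Lemma int_vecB u v : int_vec u -> int_vec v -> int_vec (u - v).
Proof. by move=> /andP[? ?] /andP[? ?]; apply/andP; split; apply: rpredB. Qed.

Lemma int_vec_mat_act X u : int_vec u -> int_vec (mat_act X u).
Proof. by move=> /andP[? ?]; apply/andP; split; rewrite rpredD // rpredM ?intr_int. Qed.

Lemma mat_actB X u v : mat_act X (u - v) = mat_act X u - mat_act X v.
Proof. by rewrite /mat_act; congr pair; rewrite !raddfB /=; ring. Qed.

Lemma mat_actM X Y u : mat_act (X * Y) u = mat_act X (mat_act Y u).
Proof. by rewrite /mat_act /ent !entE !mul_mx2E /=; congr pair; rewrite !intrD !intrM; ring. Qed.

Lemma mat_act_scalar (c : int) u : mat_act c%:M u = (c%:~R * u.1, c%:~R * u.2).
Proof. by rewrite /mat_act /ent !entE !mxE /= !mulr0n !mul0r addr0 add0r !mulr1n. Qed.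

Lemma mat_act_subr1 X u : mat_act (X - 1) u = mat_act X u - u.
Proof.
rewrite /mat_act /ent !entE !mxE /= !mulr0n !mulr1n !subr0 !intrB.
by congr pair; rewrite raddfN /= mulr1z; ring.
Qed.

Lemma torus_fixedE X x : torus_fixed X x <-> in_fund x /\ int_vec (mat_act X x - x).
Proof. by rewrite /torus_fixed /int_vec !is_intE !raddfB; split=> [[? [-> ->]] | [? /andP[]]]. Qed.

Lemma int_norm_lt1 r : r \is a Num.int -> `|r| < 1 -> r = 0.
Proof. by move=> /intrP[k ->]; rewrite -intr_norm ltrz1; case: k => [[|k]|k] //. Qed.

Lemma in_fund_eq x y : in_fund x -> in_fund y -> int_vec (x - y) -> x = y.
Proof.
case: x y => [x1 x2] [y1 y2]; rewrite /in_fund /int_vec !raddfB /=.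
move=> [/andP[? ?] /andP[? ?]] [/andP[? ?] /andP[? ?]] /andP[/int_norm_lt1 e1 /int_norm_lt1 e2].
have {}e1 : x1 - y1 = 0 by apply: e1; rewrite ltr_norml; apply/andP; split; lra.
have {}e2 : x2 - y2 = 0 by apply: e2; rewrite ltr_norml; apply/andP; split; lra.
by congr pair; apply/eqP; rewrite -subr_eq0 ?e1 ?e2.
Qed.

Lemma in_fund_fracv u : in_fund (fracv u).
Proof.
have frac_itv r : 0 <= frac r < 1.
  by rewrite subr_ge0 floor_le /= ltrBlDl -[1]/(1%:~R) -intrD floorD1_gt.
by split; apply: frac_itv.
Qed.

Lemma int_vec_sub_fracv u : int_vec (u - fracv u).
Proof. by rewrite /int_vec /fracv !raddfB /= /frac !opprK !addNKr !intr_int. Qed.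

Lemma frac_intDl r s : s \is a Num.int -> frac (s + r) = frac r.
Proof. by move=> s_int; rewrite /frac floorDzr // intrD floorK //; lra. Qed.

Lemma frac_id r : 0 <= r < 1 -> frac r = r.
Proof. by move=> r01; rewrite /frac (@floor_def _ _ 0) ?subr0. Qed.

Lemma fracv_congr u v : int_vec (u - v) -> fracv u = fracv v.
Proof.
rewrite /int_vec /fracv !raddfB /= => /andP[i1 i2].
by rewrite -[u.1](subrK v.1) -[u.2](subrK v.2) !frac_intDl.
Qed.

Lemma fracv_id x : in_fund x -> fracv x = x.
Proof. by case: x => x1 x2 [x1_01 x2_01]; rewrite /fracv /= !frac_id. Qed.

Lemma torus_fixed_fracv X u : int_vec (mat_act X u - u) -> torus_fixed X (fracv u).
Proof.
move=> Xu; apply/torus_fixedE; split; first exact: in_fund_fracv.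
set w := u - fracv u; have -> : fracv u = u - w by rewrite /w opprB addrC subrK.
rewrite mat_actB (_ : _ - _ - _ = mat_act X u - u - (mat_act X w - w)); last first.
  by apply: injective_projections; rewrite !raddfB /=; ring.
apply: int_vecB Xu _; apply: int_vecB (int_vec_sub_fracv u).
exact/int_vec_mat_act/int_vec_sub_fracv.
Qed.

Lemma fixed_den X x : torus_fixed X x -> int_vec (mat_act (\det (X - 1))%:M x).
Proof.
case/torus_fixedE=> _ Xx.
by rewrite -mul_adj_mx mulmxE mat_actM mat_act_subr1 int_vec_mat_act.
Qed.

Lemma int_vec_bezout (c d : int) u : coprimez c d ->
  int_vec (mat_act c%:M u) -> int_vec (mat_act d%:M u) -> int_vec u.
Proof.
case/coprimezP=> [[a b] /= abE]; rewrite /int_vec !mat_act_scalar /=.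
have bezout r : c%:~R * r \is a Num.int -> d%:~R * r \is a Num.int -> r \is a Num.int.
  move=> cr dr; have -> : r = (a * c + b * d)%:~R * r by rewrite abE mulr1z mul1r.
  by rewrite intrD !intrM mulrDl -!mulrA; apply: rpredD; apply: rpredM; rewrite ?intr_int.
by move=> /andP[c1 c2] /andP[d1 d2]; apply/andP; split; apply: bezout.
Qed.

Lemma intr_mul_small (D : int) r : D != 0 -> D%:~R * r \is a Num.int ->
  `|r| < `|(D%:~R : R)|^-1 -> r = 0.
Proof.
move=> D_neq0 Dr r_lt; have D_gt0 : 0 < `|(D%:~R : R)| by rewrite normr_gt0 intr_eq0.
have /eqP : D%:~R * r = 0.
  by apply: int_norm_lt1 Dr _; rewrite normrM -[X in _ < X](mulfV (lt0r_neq0 D_gt0)) ltr_pM2l.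
by rewrite mulf_eq0 intr_eq0 (negPf D_neq0) => /eqP.
Qed.

Lemma fixed_isolated X x : \det (X - 1) != 0 -> torus_fixed X x -> torus_isolated_fixed X x.
Proof.
set D := \det (X - 1) => D_neq0 fx; split => //.
exists (`|(D%:~R : R)|^-1); split; first by rewrite invr_gt0 normr_gt0 intr_eq0.
move=> y fy [k1 [k2 [k1_lt k2_lt]]].
have coord r s (k : int) : D%:~R * r \is a Num.int -> D%:~R * s \is a Num.int ->
    `|s - r - k%:~R| < `|(D%:~R : R)|^-1 -> s - r \is a Num.int.
  move=> Dr Ds lt; rewrite -(subrK k%:~R (s - r)) (intr_mul_small D_neq0 _ lt) ?add0r ?intr_int //.
  by rewrite !mulrBr -intrM; apply: rpredB; [apply: rpredB | apply: intr_int].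
move: (fixed_den fx) (fixed_den fy); rewrite /int_vec !mat_act_scalar /=.
move=> /andP[Dx1 Dx2] /andP[Dy1 Dy2].
have /torus_fixedE[fund_x _] := fx; have /torus_fixedE[fund_y _] := fy.
apply: in_fund_eq fund_y fund_x _.
by rewrite /int_vec !raddfB /= (coord _ _ _ Dx1 Dy1 k1_lt) (coord _ _ _ Dx2 Dy2 k2_lt).
Qed.

Lemma mat_actD X u v : mat_act X (u + v) = mat_act X u + mat_act X v.
Proof. by rewrite /mat_act; congr pair; rewrite !raddfD /=; ring. Qed.

Lemma small_fixed_vector X (e : R) : \det (X - 1) = 0 -> 0 < e ->
  exists v, [/\ v != 0, mat_act X v = v, `|v.1| < e & `|v.2| < e].
Proof.
move=> /mx2_kernel[v1 [v2 [v_neq0]]]; rewrite !mxE /= !mulr0n !mulr1n !subr0 => k1 k2 e_gt0.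
pose V : R := (`|v1| + `|v2|)%:~R; have V_ge0 : 0 <= V by rewrite ler0z.
pose t := e / (1 + V); have t_gt0 : 0 < t by rewrite divr_gt0 // ltr_wpDr.
have tv_lt (k : int) : `|k| <= `|v1| + `|v2| -> `|t * k%:~R| < e.
  move=> k_le; rewrite normrM gtr0_norm // -intr_norm.
  apply: (le_lt_trans (y := t * V)); first by rewrite ler_pM2l // ler_int.
  by rewrite /t mulrAC ltr_pdivrMr ?ltr_pM2l ?ltrDr // ltr_wpDr.
exists (t * v1%:~R, t * v2%:~R); split.
- apply: contraTneq v_neq0 => tv0.
  move: (congr1 fst tv0) (congr1 snd tv0) => /= /eqP + /eqP.
  by rewrite !(mulf_eq0 t) (gt_eqF t_gt0) !intr_eq0 /= => /eqP-> /eqP->.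
- rewrite /mat_act /ent !entE /=; congr pair.
  + transitivity (t * v1%:~R + t * ((X 0 0 - 1) * v1 + X 0 1 * v2)%:~R).
      by rewrite !(intrD, intrM, intrB); ring.
    by rewrite k1 mulr0 addr0.
  + transitivity (t * v2%:~R + t * (X 1 0 * v1 + (X 1 1 - 1) * v2)%:~R).
      by rewrite !(intrD, intrM, intrB); ring.
    by rewrite k2 mulr0 addr0.
- by apply: tv_lt; rewrite lerDl.
- by apply: tv_lt; rewrite lerDr.
Qed.

(* Along a rational line of fixed points through [x] there are fixed points
   arbitrarily close to [x]. *)
Lemma fixed_not_isolated X x : \det (X - 1) = 0 -> ~ torus_isolated_fixed X x.
Proof.
move=> D0 [/torus_fixedE[_ Xx] [eps [eps_gt0 iso]]].
have e_gt0 : 0 < Num.min eps 1 by rewrite lt_min eps_gt0 ltr01.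
have [v [v_neq0 Xv v1_lt v2_lt]] := small_fixed_vector D0 e_gt0.
move: v1_lt v2_lt; rewrite !lt_min => /andP[v1_eps v1_lt1] /andP[v2_eps v2_lt1].
have fy : torus_fixed X (fracv (x + v)).
  apply: torus_fixed_fracv; rewrite mat_actD Xv (_ : _ - _ = mat_act X x - x) //.
  by apply: injective_projections; rewrite !raddfB !raddfD /=; ring.
have xvE : fracv (x + v) = x.
  apply: iso fy _; exists (- Num.floor (x.1 + v.1)), (- Num.floor (x.2 + v.2)).
  rewrite /fracv /frac /= !intrN.
  by split; [rewrite (_ : _ - _ = v.1) | rewrite (_ : _ - _ = v.2)] => //; ring.
have := int_vec_sub_fracv (x + v); rewrite xvE (_ : _ - _ = v); last first.
  by apply: injective_projections; rewrite !raddfB !raddfD /=; ring.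
case/andP=> /int_norm_lt1/(_ v1_lt1) v1_0 /int_norm_lt1/(_ v2_lt1) v2_0.
by move: v_neq0; rewrite [v]surjective_pairing v1_0 v2_0 eqxx.
Qed.

Lemma conj_fixed P X Y x : P * X = Y * P ->
  torus_fixed X x -> torus_fixed Y (fracv (mat_act P x)).
Proof.
move=> PX /torus_fixedE[_ Xx]; apply: torus_fixed_fracv.
by rewrite -mat_actM -PX mat_actM -mat_actB int_vec_mat_act.
Qed.

Lemma conj_fixed_inj P X x y : coprimez (\det P) (\det (X - 1)) ->
  torus_fixed X x -> torus_fixed X y ->
  fracv (mat_act P x) = fracv (mat_act P y) -> x = y.
Proof.
move=> cop fx fy Pxy; have /torus_fixedE[fund_x _] := fx; have /torus_fixedE[fund_y _] := fy.
apply: in_fund_eq fund_x fund_y (int_vec_bezout cop _ _); last first.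
  by rewrite mat_actB; apply: int_vecB; apply: fixed_den.
rewrite -mul_adj_mx mulmxE mat_actM; apply: int_vec_mat_act.
rewrite mat_actB (_ : _ - _ = (mat_act P x - fracv (mat_act P x)) - (mat_act P y - fracv (mat_act P y))).
  by apply: int_vecB; apply: int_vec_sub_fracv.
by rewrite Pxy; apply: injective_projections; rewrite !raddfB /=; ring.
Qed.

Lemma conj_fixed_surj P X Y y : P * X = Y * P -> \det P != 0 ->
  coprimez (\det P) (\det (Y - 1)) -> torus_fixed Y y ->
  exists2 x, torus_fixed X x & fracv (mat_act P x) = y.
Proof.
move=> PX dP /coprimezP[[a b] /= abE] fy; set D := \det (Y - 1) in abE.
pose Q := a *: \adj P; have QY : Q * Y = X * Q.
  by rewrite -scalerAl (adj_conj (esym PX) dP) scalerAr.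
exists (fracv (mat_act Q y)); first exact: conj_fixed QY fy.
have /torus_fixedE[fund_y _] := fy; rewrite -[RHS](fracv_id fund_y); apply: fracv_congr.
set z := mat_act Q y.
have Pz : mat_act P z - y = mat_act (- b)%:M (mat_act D%:M y).
  rewrite /z /Q -mat_actM -scalerAr -mulmxE mul_mx_adj scale_scalar_mx !mat_act_scalar.
  have abR : a%:~R * (\det P)%:~R + b%:~R * D%:~R = 1 :> R by rewrite -!intrM -intrD abE.
  apply: injective_projections; rewrite raddfB /= !intrM intrN;
    by rewrite -[X in _ - X]mul1r -[X in _ - X * _]abR; ring.
rewrite (_ : _ - y = (mat_act P z - y) - mat_act P (z - fracv z)); last first.
  by rewrite mat_actB; apply: injective_projections; rewrite !raddfB /=; ring.
by apply: int_vecB; rewrite ?Pz; apply: int_vec_mat_act; [apply: fixed_den | apply: int_vec_sub_fracv].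
Qed.

Lemma isolated_fixed_equinumerous X Y : locally_conj X Y ->
  equinumerous (torus_isolated_fixed (R:=R) X) (torus_isolated_fixed (R:=R) Y).
Proof.
move=> XY; have det_subr1 : \det (X - 1) = \det (Y - 1).
  have [P [PX /(coprime_neq0 (isT : 1 < 2)%N) dP]] := XY 2 isT.
  exact: det_subr1_conj PX dP.
have [D0|D_neq0] := eqVneq (\det (X - 1)) 0.
  exists id; split; [|split].
  - by move=> x /(fixed_not_isolated D0).
  - by move=> x y /(fixed_not_isolated D0).
  - by move=> y; rewrite det_subr1 in D0; move/(fixed_not_isolated D0).
have n_gt1 : (1 < `|\det (X - 1)|.*2)%N by rewrite -addnn; move: D_neq0; rewrite -absz_gt0; lia.
have [P [PX copP]] := XY _ (ltnW n_gt1); have dP := coprime_neq0 n_gt1 copP.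
have cop : coprimez (\det P) (\det (X - 1)).
  by move: copP; rewrite coprimezE -muln2 coprimeMr => /andP[].
exists (fun x => fracv (mat_act P x)); split; [|split].
- by move=> x [fx _]; apply: fixed_isolated (conj_fixed PX fx); rewrite -det_subr1.
- by move=> x y [fx _] [fy _]; apply: conj_fixed_inj cop fx fy.
- move=> y [fy _]; rewrite det_subr1 in cop.
  have [x fx <-] := conj_fixed_surj PX dP cop fy.
  by exists x; split=> //; apply: fixed_isolated D_neq0 fx.
Qed.

End Torus.

Theorem corollary42 (M N : 'M[int]_2) :
  \det M = \det N -> \tr M = \tr N -> mgcd M = mgcd N ->
  (forall n : nat, (0 < n)%N -> same_local_stats M N n) /\
  (forall n m : nat, (0 < n)%N -> lat_fix_count (M ^+ m) n = lat_fix_count (N ^+ m) n) /\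
  (forall (R : realType) (m : nat),
     equinumerous (torus_isolated_fixed (R:=R) (M ^+ m))
                  (torus_isolated_fixed (R:=R) (N ^+ m))).
Proof.
move=> detE trE gE; have MN := locally_conj_invariants detE trE gE.
split; [|split].
- by move=> n /MN[P [PM cop]]; apply: same_local_stats_conj PM cop.
- by move=> n m /(locally_conj_exp m MN)[P [PM cop]]; apply: lat_fix_count_conj PM cop.
- by move=> R m; apply: isolated_fixed_equinumerous; apply: locally_conj_exp.
Qed.
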